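(* For every weighted graph $G=(V,w)$, $\mathrm{cdim}(G)\le\widetilde{\mathrm{cdim}}(G)$.
   Context: An $n$-vertex weighted graph $G=(V,w)$ is given by $w\in\mathbb{R}_{\ge0}^{\binom n2}$. The edge set is $E=\{e: w(e)>0\}$, $m=|E|$. For $\emptyset\neq X\subsetneq V$, the cut $\Delta(X)$ is the set of edges of $E$ with exactly one endpoint in $X$, and $S_X\in\{0,1\}^{\binom n2}$ is the indicator of all pairs with exactly one endpoint in $X$; cut weight is $\langle S_X,w\rangle$ and $c^*$ is the minimum cut weight. $\mathcal{M}(G)$ is the set of minimum-weight cuts; $\chi(S)\in\{0,1\}^m$ is the characteristic vector of $S\subseteq E$ indexed by $E$; $\mathrm{cdim}(G)=\dim\,\mathrm{span}\{\chi(S):S\in\mathcal{M}(G)\}$. For $Y\in\mathbb{R}^{M\times N}$, $w\in\mathbb{R}^N$, $c\in\mathbb{R}^M$, the $(w,c)$ one-sided row-by-row $\ell_1$-approximate rank of $Y$ is the minimum rank of $\tilde Y$ with $\tilde Y\le Y$ entrywise and $\sum_j|w(j)(Y(i,j)-\tilde Y(i,j))|\le c(i)$ for all $i$. With $M_G$ the $(2^{n-1}-1)\times\binom n2$ matrix whose rows are the $S_X$ over all unordered bipartitions $\{X,V\setminus X\}$ into nonempty parts, and $c=M_Gw-c^*\mathbf{1}$, $\widetilde{\mathrm{cdim}}(G)$ is the $(w,c)$ one-sided row-by-row $\ell_1$-approximate rank of $M_G$. *)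

From HB Require Import structures.
From mathcomp Require Import all_boot all_order all_algebra.
From mathcomp Require Import boolp reals.
Set Implicit Arguments. Unset Strict Implicit. Unset Printing Implicit Defensive.
Import Order.TTheory GRing.Theory Num.Theory.
Local Open Scope ring_scope.

(* Vertices: 'I_n.  Unordered pairs {u,v} (u <> v) encoded as (u,v) with u < v. *)
Definition pair_t (n : nat) := {p : 'I_n * 'I_n | (p.1 < p.2)%N}.

(* Unordered bipartitions {X, V \ X} into nonempty parts, encoded literally as
   the two-element set of sets {X, ~X}. *)
Definition bip_pred (n : nat) (B : {set {set 'I_n}}) : bool :=
  [exists X : {set 'I_n}, [&& X != set0, X != setT & B == [set X; ~: X]]].
Definition bip_t (n : nat) := {B : {set {set 'I_n}} | bip_pred B}.

Section Defs.
Variables (R : realType) (n : nat).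

Definition sep (B : bip_t n) (e : pair_t n) : bool :=
  [exists X in val B, ((val e).1 \in X) && ((val e).2 \notin X)].

Definition S_ind (B : bip_t n) (e : pair_t n) : R := (sep B e)%:R.

Variable w : {ffun pair_t n -> R}.

Definition Eset : {set pair_t n} := [set e | 0 < w e].

Definition Delta (B : bip_t n) : {set pair_t n} := [set e in Eset | sep B e].

Definition cutw (B : bip_t n) : R := \sum_(e : pair_t n) S_ind B e * w e.

(* c* : the minimum cut weight (0 if there is no bipartition, i.e. n < 2) *)
Definition cstar : R :=
  oapp (fun B0 => \big[Num.min/cutw B0]_(B : bip_t n) cutw B) 0 [pick B : bip_t n].

Definition mincuts : {set {set pair_t n}} :=
  [set Delta B | B in [pred B : bip_t n | cutw B == cstar]].

Definition chi (S : {set pair_t n}) : 'rV[R]_#|Eset| :=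
  \row_(i < #|Eset|) ((enum_val i \in S) : bool)%:R.

Definition cdim : nat := \rank (\sum_(S in mincuts) <<chi S>>)%MS.

Definition MG : 'M[R]_(#|{: bip_t n}|, #|{: pair_t n}|) :=
  \matrix_(i, j) S_ind (enum_val i) (enum_val j).

Definition wcol : 'cV[R]_#|{: pair_t n}| := \col_j w (enum_val j).

Definition cvec : 'cV[R]_#|{: bip_t n}| := MG *m wcol - const_mx cstar.

Definition one_sided_approx M N (Y Yt : 'M[R]_(M, N)) (wv : 'cV[R]_N)
    (c : 'cV[R]_M) : Prop :=
  (forall i j, Yt i j <= Y i j) /\
  (forall i, \sum_j `|wv j 0 * (Y i j - Yt i j)| <= c i 0).

Definition approx_rank_pred M N (Y : 'M[R]_(M, N)) wv c (r : nat) : bool :=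
  `[< exists Yt : 'M[R]_(M, N), one_sided_approx Y Yt wv c /\ \rank Yt = r >].

Lemma cutw_ge_cstar (B : bip_t n) : cstar <= cutw B.
Proof.
rewrite /cstar; case: pickP => [B0 _ /=|]; last by move=> /(_ B).
rewrite (bigD1 B) //= ge_min lexx //.
Qed.

Lemma tcdim_exists : exists r, approx_rank_pred MG wcol cvec r.
Proof.
exists (\rank MG); apply/asboolP; exists MG; split=> //; split=> // i.
rewrite big1 => [|j _]; last by rewrite subrr mulr0 normr0.
rewrite /cvec !mxE subr_ge0.
have -> : \sum_j MG i j * wcol j 0 = cutw (enum_val i).
  rewrite /cutw [RHS](reindex (@enum_val _ (pred_of_simpl predT))) /=.
    by apply: eq_bigr => j _; rewrite !mxE.
  by exists enum_rank => x _; rewrite ?enum_valK ?enum_rankK.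
exact: cutw_ge_cstar.
Qed.

Definition tcdim : nat := ex_minn tcdim_exists.

End Defs.

From mathcomp Require Import all_boot all_order all_algebra.
From mathcomp Require Import boolp reals.
Import Order.TTheory GRing.Theory Num.Theory.
Local Open Scope ring_scope.

(* Let Yt be any one-sided row-by-row l1-approximation of M_G.  The slack
   c(B) = <S_B, w> - c* vanishes on every minimum cut B, so the row of Yt at
   such a B must agree with the row of M_G on every column e with w(e) > 0.
   Restricting the columns of a matrix to the edge set E is right
   multiplication by a 0/1 selection matrix P, and the row of M_G P at B is
   exactly chi(Delta(B)).  Hence every chi(S), S in M(G), is a row of Yt P,
   so cdim(G) <= rank (Yt P) <= rank Yt; minimising over Yt gives the claim.
   The argument does not use the nonnegativity of w. *)

Section OneSidedApprox.
Variable R : realType.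

(* A row with zero slack is approximated exactly on every column of nonzero
   weight: the l1 error of that row is a sum of nonnegative terms bounded by 0. *)
Lemma approx_zero_slack {M N} {Y Yt : 'M[R]_(M, N)} {wv c} {i j} :
  one_sided_approx Y Yt wv c -> c i 0 = 0 -> wv j 0 != 0 -> Yt i j = Y i j.
Proof.
move=> [_ err_le] ci0 wj.
have : `|wv j 0 * (Y i j - Yt i j)| <= 0.
  rewrite -ci0; apply: le_trans (err_le i).
  by rewrite (bigD1 j) //= lerDl; apply: sumr_ge0 => k _; exact: normr_ge0.
by rewrite normr_le0 mulf_eq0 (negbTE wj) subr_eq0 => /eqP ->.
Qed.

End OneSidedApprox.

Section ColumnSelection.
Variables (R : realType) (T : finType) (A : {set T}).

Definition select_mx : 'M[R]_(#|{: T}|, #|A|) :=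
  \matrix_(j, k) ((@enum_val _ (pred_of_simpl predT) j == enum_val k) : bool)%:R.

Lemma select_mxE M (Y : 'M[R]_(M, #|{: T}|)) i k :
  (Y *m select_mx) i k = Y i (enum_rank (enum_val k)).
Proof.
rewrite !mxE (bigD1 (enum_rank (enum_val k))) //= big1 => [|j jk].
  by rewrite !mxE enum_rankK eqxx mulr1 addr0.
rewrite !mxE; case: eqP => [jE|]; last by rewrite mulr0.
by move: jk; rewrite -jE enum_valK eqxx.
Qed.

End ColumnSelection.
Arguments select_mx R {T} A.

Section CutMatrix.
Variables (R : realType) (n : nat) (w : {ffun pair_t n -> R}).

Lemma MG_wcol i : (MG R n *m wcol w) i 0 = cutw w (enum_val i).
Proof.
rewrite mxE /cutw [RHS](reindex (@enum_val _ (pred_of_simpl predT))) /=.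
  by apply: eq_bigr => j _; rewrite !mxE.
by exists enum_rank => x _; rewrite ?enum_valK ?enum_rankK.
Qed.

Lemma cvec_mincut {B} : cutw w B = cstar w -> cvec w (enum_rank B) 0 = 0.
Proof.
by move=> Bmin; rewrite /cvec mxE (MG_wcol (enum_rank B)) !mxE enum_rankK Bmin subrr.
Qed.

Lemma chi_Delta B :
  chi w (Delta w B) = row (enum_rank B) (MG R n *m select_mx R (Eset w)).
Proof.
apply/rowP => k; rewrite mxE [RHS]mxE select_mxE !mxE !enum_rankK.
by rewrite /Delta inE (enum_valP k).
Qed.

Lemma approx_mincut_row {Yt B} :
  one_sided_approx (MG R n) Yt (wcol w) (cvec w) -> cutw w B = cstar w ->
  row (enum_rank B) (Yt *m select_mx R (Eset w))
  = row (enum_rank B) (MG R n *m select_mx R (Eset w)).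
Proof.
move=> approx Bmin; apply/rowP => k; rewrite [LHS]mxE [RHS]mxE !select_mxE.
apply: approx_zero_slack approx (cvec_mincut Bmin) _.
have := enum_valP k; rewrite inE mxE enum_rankK => /gt_eqF ->//.
Qed.

Lemma cdim_le_approx_rank r :
  approx_rank_pred (MG R n) (wcol w) (cvec w) r -> (cdim w <= r)%N.
Proof.
move=> /asboolP [Yt [approx <-]].
apply: leq_trans (mxrankM_maxl Yt (select_mx R (Eset w))).
apply: mxrankS; apply/sumsmx_subP => _ /imsetP [B /eqP Bmin ->].
by rewrite genmxE chi_Delta -(approx_mincut_row approx Bmin) row_sub.
Qed.

End CutMatrix.

Theorem lemma5 (R : realType) (n : nat) (w : {ffun pair_t n -> R})
  (hw : forall e, 0 <= w e) :
  (cdim w <= tcdim w)%N.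
Proof. by rewrite /tcdim; case: ex_minnP => r approx_r _; exact: cdim_le_approx_rank. Qed.
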